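(* For all (well-formed, possibly open) $\lambda$-terms $t$ and $s$, $t \approx_{\mathrm{nf}} s$ if and only if there exists a natural number $n > \max(\mathrm{fv}(t) \cup \mathrm{fv}(s))$ such that $\langle t, [], n\rangle_{\mathrm{ev}} \approx \langle s, [], n\rangle_{\mathrm{ev}}$, where $\approx$ is machine bisimilarity on configurations of the NFB machine.
   Context: Terms: $t,s ::= f \mid x \mid \lambda x.t \mid t\,s$, where $f$ ranges over free variables, identified with natural numbers, and $x$ over bound variables; terms are well formed (every $x$ is bound by an enclosing $\lambda$); $\mathrm{fv}(t)$ is the set of free variables of $t$. Stacks: $\pi ::= t::\pi \mid []$. KAM transitions (on open terms): $\langle t\,s, \pi\rangle \to \langle t, s :: \pi\rangle$ and $\langle \lambda x.t, s::\pi\rangle \to \langle t\{s/x\}, \pi\rangle$; $\to^*$ is its reflexive transitive closure. A relation $\mathcal{R}$ on terms is extended to stacks by: $\pi_1 \mathcal R \pi_2$ iff $\pi_1=\pi_2=[]$, or $\pi_1 = t::\pi_1'$, $\pi_2 = s::\pi_2'$, $t\mathcal R s$ and $\pi_1'\mathcal R\pi_2'$. Normal-form bisimulation: a symmetric relation $\mathcal{R}$ on terms such that $t \mathcal R s$ implies (1) if $\langle t, []\rangle \to^* \langle \lambda x.t', []\rangle$ then there is $s'$ with $\langle s,[]\rangle \to^* \langle \lambda x.s', []\rangle$ and $t'\{f/x\} \mathcal R s'\{f/x\}$ for a fresh $f$; (2) if $\langle t, []\rangle \to^* \langle f, \pi\rangle$ then there is $\pi'$ with $\langle s,[]\rangle\to^*\langle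 f,\pi'\rangle$ and $\pi\mathcal R\pi'$. Normal-form bisimilarity $\approx_{\mathrm{nf}}$ is the largest normal-form bisimulation. NFB machine: configurations $\langle t,\pi,n\rangle_{\mathrm{ev}}$ and $\langle \pi, n\rangle_{\mathrm{cont}}$ ($n\in\mathbb N$); transitions labelled by $\tau$ or by flags: $\langle t\,s,\pi,n\rangle_{\mathrm{ev}} \xrightarrow{\tau} \langle t, s::\pi, n\rangle_{\mathrm{ev}}$; $\langle \lambda x.t, s::\pi, n\rangle_{\mathrm{ev}} \xrightarrow{\tau} \langle t\{s/x\},\pi,n\rangle_{\mathrm{ev}}$; $\langle \lambda x.t, [], n\rangle_{\mathrm{ev}} \xrightarrow{\lambda} \langle t\{n/x\}, [], n+1\rangle_{\mathrm{ev}}$; $\langle f, \pi, n\rangle_{\mathrm{ev}} \xrightarrow{f} \langle \pi, n\rangle_{\mathrm{cont}}$ (the flag is the natural number $f$); $\langle [], n\rangle_{\mathrm{cont}} \xrightarrow{\mathsf{done}}$ (terminating transition, to no configuration); $\langle t::\pi, n\rangle_{\mathrm{cont}} \xrightarrow{\mathsf{enter}} \langle t, [], n\rangle_{\mathrm{ev}}$; $\langle t::\pi, n\rangle_{\mathrm{cont}} \xrightarrow{\mathsf{skip}} \langle \pi, n\rangle_{\mathrm{cont}}$. Machine bisimulation: a symmetric relation $\mathcal R$ on configurations such that $C_1\mathcal R C_2$ implies, for every flag $F$: (1) if $C_1 \xrightarrow{\tau}^* \xrightarrow{F} C_1'$ then there is $C_2'$ with $C_2 \xrightarrow{\tau}^*\xrightarrow{F}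 C_2'$ and $C_1'\mathcal R C_2'$; (2) if $C_1 \xrightarrow{\tau}^*\xrightarrow{F}$ by a terminating transition then $C_2 \xrightarrow{\tau}^*\xrightarrow{F}$ by a terminating transition. Machine bisimilarity $\approx$ is the largest machine bisimulation. *)

(* Locally nameless lambda-terms: free variables are natural
   numbers (Fvar f), bound variables are de Bruijn indices (Bvar i). *)
From Stdlib Require Import List Arith.
Import ListNotations.

Inductive term : Type :=
| Fvar : nat -> term
| Bvar : nat -> term
| Lam  : term -> term
| App  : term -> term -> term.

Fixpoint open_rec (k : nat) (u : term) (t : term) : term :=
  match t with
  | Fvar f => Fvar f
  | Bvar i => if Nat.eqb i k then u else Bvar i
  | Lam t1 => Lam (open_rec (S k) u t1)
  | App t1 t2 => App (open_rec k u t1) (open_rec k u t2)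
  end.

Definition open (t u : term) : term := open_rec 0 u t.

Inductive wf_rec : nat -> term -> Prop :=
| wf_fvar : forall k f, wf_rec k (Fvar f)
| wf_bvar : forall k i, i < k -> wf_rec k (Bvar i)
| wf_lam  : forall k t, wf_rec (S k) t -> wf_rec k (Lam t)
| wf_app  : forall k t s, wf_rec k t -> wf_rec k s -> wf_rec k (App t s).

Definition wf (t : term) : Prop := wf_rec 0 t.

Fixpoint fv (t : term) : list nat :=
  match t with
  | Fvar f => [f]
  | Bvar _ => []
  | Lam t1 => fv t1
  | App t1 t2 => fv t1 ++ fv t2
  end.

Definition stack := list term.

Inductive kam_step : term * stack -> term * stack -> Prop :=
| kam_app : forall t s pi, kam_step (App t s, pi) (t, s :: pi)
| kam_beta : forall t s pi, kam_step (Lam t, s :: pi) (open t s, pi).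

Inductive kam_star : term * stack -> term * stack -> Prop :=
| kam_refl : forall c, kam_star c c
| kam_trans : forall c1 c2 c3, kam_step c1 c2 -> kam_star c2 c3 -> kam_star c1 c3.

Inductive stack_rel (R : term -> term -> Prop) : stack -> stack -> Prop :=
| srel_nil : stack_rel R [] []
| srel_cons : forall t s pi1 pi2,
    R t s -> stack_rel R pi1 pi2 -> stack_rel R (t :: pi1) (s :: pi2).

Definition symmetric_rel {A} (R : A -> A -> Prop) : Prop :=
  forall x y, R x y -> R y x.

Definition nf_bisimulation (R : term -> term -> Prop) : Prop :=
  symmetric_rel R /\
  forall t s, R t s ->
    (forall t', kam_star (t, []) (Lam t', []) ->
       exists s', kam_star (s, []) (Lam s', []) /\
         exists f, ~ In f (fv t') /\ ~ In f (fv s') /\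
                   R (open t' (Fvar f)) (open s' (Fvar f))) /\
    (forall f pi, kam_star (t, []) (Fvar f, pi) ->
       exists pi', kam_star (s, []) (Fvar f, pi') /\ stack_rel R pi pi').

Definition nf_bisimilar (t s : term) : Prop :=
  exists R, nf_bisimulation R /\ R t s.

Inductive config : Type :=
| Ev : term -> stack -> nat -> config
| Cont : stack -> nat -> config.

Inductive flag : Type :=
| FLam : flag
| FVar : nat -> flag
| FDone : flag
| FEnter : flag
| FSkip : flag.

Inductive tau_step : config -> config -> Prop :=
| tau_app : forall t s pi n, tau_step (Ev (App t s) pi n) (Ev t (s :: pi) n)
| tau_beta : forall t s pi n, tau_step (Ev (Lam t) (s :: pi) n) (Ev (open t s) pi n).

Inductive tau_star : config -> config -> Prop :=
| tau_refl : forall c, tau_star c c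
| tau_trans : forall c1 c2 c3, tau_step c1 c2 -> tau_star c2 c3 -> tau_star c1 c3.

Inductive flag_step : config -> flag -> config -> Prop :=
| fs_lam : forall t n, flag_step (Ev (Lam t) [] n) FLam (Ev (open t (Fvar n)) [] (S n))
| fs_var : forall f pi n, flag_step (Ev (Fvar f) pi n) (FVar f) (Cont pi n)
| fs_enter : forall t pi n, flag_step (Cont (t :: pi) n) FEnter (Ev t [] n)
| fs_skip : forall t pi n, flag_step (Cont (t :: pi) n) FSkip (Cont pi n).

Inductive flag_term : config -> flag -> Prop :=
| ft_done : forall n, flag_term (Cont [] n) FDone.

Definition machine_bisimulation (R : config -> config -> Prop) : Prop :=
  symmetric_rel R /\
  forall C1 C2, R C1 C2 ->
    forall F : flag,
      (forall C1' C1'', tau_star C1 C1' -> flag_step C1' F C1'' ->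
         exists C2' C2'', tau_star C2 C2' /\ flag_step C2' F C2'' /\ R C1'' C2'') /\
      ((exists C1', tau_star C1 C1' /\ flag_term C1' F) ->
         exists C2', tau_star C2 C2' /\ flag_term C2' F).

Definition machine_bisimilar (C1 C2 : config) : Prop :=
  exists R, machine_bisimulation R /\ R C1 C2.

From Stdlib Require Import List Arith Lia.
Import ListNotations.

(** The NFB machine explores a term exactly as a normal-form bisimulation
    does: KAM runs are its tau steps, and every observation (a lambda, a
    head variable, the end of a stack, entering or skipping an argument) is
    a flag.  Given the normal-form bisimilarity, relate [Ev] configurations
    of bisimilar terms and [Cont] configurations of pointwise bisimilar
    stacks, all sharing a counter [n] above every free variable; this is a
    machine bisimulation.  The one subtlety is that the machine always
    opens a lambda with the variable [n] while a normal-form bisimulation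
    only provides some fresh [f]; since bisimilarity is invariant under
    swapping two free variables, [f] may be replaced by [n].  Conversely,
    terms whose [Ev] configurations are machine bisimilar at such a counter
    form a normal-form bisimulation, the stack condition being read off
    from the [done], [enter] and [skip] flags. *)

Definition fv_below (n : nat) (t : term) : Prop := forall f, In f (fv t) -> f < n.

Definition stack_fv_below (n : nat) (pi : stack) : Prop :=
  forall u, In u pi -> fv_below n u.

Definition kam_fv_below (n : nat) (c : term * stack) : Prop :=
  fv_below n (fst c) /\ stack_fv_below n (snd c).

Lemma stack_fv_below_nil (n : nat) : stack_fv_below n [].
Proof. intros u []. Qed.

Lemma fv_below_notin (n : nat) (t : term) : fv_below n t -> ~ In n (fv t).
Proof. intros Ht Hn; apply Ht in Hn; lia. Qed.

Lemma fv_open_rec_incl (t : term) :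
  forall k u x, In x (fv (open_rec k u t)) -> In x (fv t) \/ In x (fv u).
Proof.
  induction t as [f | i | t IH | t1 IH1 t2 IH2]; simpl; intros k u x Hx.
  - auto.
  - destruct (Nat.eqb i k); simpl in Hx; tauto.
  - exact (IH _ _ _ Hx).
  - rewrite in_app_iff in *.
    destruct Hx as [Hx | Hx];
      [destruct (IH1 _ _ _ Hx) | destruct (IH2 _ _ _ Hx)]; tauto.
Qed.

Lemma fv_below_open (n : nat) (t u : term) :
  fv_below n t -> fv_below n u -> fv_below n (open t u).
Proof. intros Ht Hu x Hx; destruct (fv_open_rec_incl _ _ _ _ Hx); auto. Qed.

Lemma fv_below_open_fresh (n : nat) (t : term) :
  fv_below n t -> fv_below (S n) (open t (Fvar n)).
Proof.
  intros Ht; apply fv_below_open.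
  - intros x Hx; apply Ht in Hx; lia.
  - intros x [<- | []]; lia.
Qed.

Lemma fv_below_app (n : nat) (t s : term) :
  (forall f, In f (fv t ++ fv s) -> f < n) -> fv_below n t /\ fv_below n s.
Proof. intros H; split; intros f Hf; apply H, in_or_app; auto. Qed.

Lemma in_le_list_max (l : list nat) (x : nat) : In x l -> x <= list_max l.
Proof.
  intros Hx.
  exact (proj1 (Forall_forall _ l) (proj1 (list_max_le l _) (le_n _)) x Hx).
Qed.

Lemma kam_step_fv_below (n : nat) (c c' : term * stack) :
  kam_step c c' -> kam_fv_below n c -> kam_fv_below n c'.
Proof.
  intros [t s pi | t s pi] [Ht Hpi]; split; simpl in *.
  - intros f Hf; apply Ht, in_or_app; auto.
  - intros u [<- | Hu]; [intros f Hf; apply Ht, in_or_app; auto | auto].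
  - apply fv_below_open; [exact Ht | apply Hpi; simpl; auto].
  - intros u Hu; apply Hpi; simpl; auto.
Qed.

Lemma kam_star_fv_below (n : nat) (c c' : term * stack) :
  kam_star c c' -> kam_fv_below n c -> kam_fv_below n c'.
Proof.
  induction 1 as [| c1 c2 c3 Hstep _ IH]; auto.
  intros Hc; apply IH; exact (kam_step_fv_below n _ _ Hstep Hc).
Qed.

Lemma kam_run_fv_below (n : nat) (t t' : term) (pi : stack) :
  kam_star (t, []) (t', pi) -> fv_below n t -> fv_below n t' /\ stack_fv_below n pi.
Proof.
  intros K Ht; exact (kam_star_fv_below n _ _ K (conj Ht (stack_fv_below_nil n))).
Qed.

Lemma kam_star_tau_star (n : nat) (c c' : term * stack) :
  kam_star c c' -> tau_star (Ev (fst c) (snd c) n) (Ev (fst c') (snd c') n).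
Proof.
  induction 1 as [| c1 c2 c3 Hstep _ IH]; [apply tau_refl |].
  eapply tau_trans; [| exact IH]; destruct Hstep; constructor.
Qed.

Lemma tau_star_Ev_inv (t : term) (pi : stack) (n : nat) (C : config) :
  tau_star (Ev t pi n) C ->
  exists t' pi', C = Ev t' pi' n /\ kam_star (t, pi) (t', pi').
Proof.
  intros H; remember (Ev t pi n) as C0 eqn:E; revert t pi E.
  induction H as [C | C1 C2 C3 Hstep _ IH]; intros t pi ->.
  - exists t, pi; split; [reflexivity | apply kam_refl].
  - inversion Hstep; subst;
      destruct (IH _ _ eq_refl) as (t' & pi' & -> & K);
      exists t', pi'; (split; [reflexivity | eapply kam_trans; [constructor | exact K]]).
Qed.

Lemma tau_star_Cont_inv (pi : stack) (n : nat) (C : config) :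
  tau_star (Cont pi n) C -> C = Cont pi n.
Proof. intros H; inversion H as [| ? ? ? Hstep]; [reflexivity | inversion Hstep]. Qed.

Definition swap_var (a b x : nat) : nat :=
  if Nat.eqb x a then b else if Nat.eqb x b then a else x.

Fixpoint swap (a b : nat) (t : term) : term :=
  match t with
  | Fvar f => Fvar (swap_var a b f)
  | Bvar i => Bvar i
  | Lam t => Lam (swap a b t)
  | App t s => App (swap a b t) (swap a b s)
  end.

Lemma swap_var_l (a b : nat) : swap_var a b a = b.
Proof. unfold swap_var; now rewrite Nat.eqb_refl. Qed.

Lemma swap_var_involutive (a b x : nat) : swap_var a b (swap_var a b x) = x.
Proof.
  unfold swap_var.
  destruct (Nat.eqb_spec x a) as [-> | Hxa]; [| destruct (Nat.eqb_spec x b) as [-> | Hxb]].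
  - destruct (Nat.eqb_spec b a); [auto | now rewrite Nat.eqb_refl].
  - now rewrite Nat.eqb_refl.
  - apply Nat.eqb_neq in Hxa, Hxb; now rewrite Hxa, Hxb.
Qed.

Lemma swap_involutive (a b : nat) (t : term) : swap a b (swap a b t) = t.
Proof. induction t; simpl; f_equal; auto using swap_var_involutive. Qed.

Lemma in_fv_swap (a b : nat) (t : term) (x : nat) :
  In (swap_var a b x) (fv (swap a b t)) <-> In x (fv t).
Proof.
  induction t as [f | i | t IH | t1 IH1 t2 IH2]; simpl; try rewrite !in_app_iff; try tauto.
  split; intros [E | []]; left.
  - now rewrite <- (swap_var_involutive a b f), E, swap_var_involutive.
  - now rewrite E.
Qed.

Lemma notin_fv_swap (a b : nat) (t : term) (x : nat) :
  ~ In x (fv (swap a b t)) -> ~ In (swap_var a b x) (fv t).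
Proof.
  intros Hx Hin; apply Hx.
  rewrite <- (swap_var_involutive a b x); apply in_fv_swap, Hin.
Qed.

Lemma swap_fresh (a b : nat) (t : term) :
  ~ In a (fv t) -> ~ In b (fv t) -> swap a b t = t.
Proof.
  induction t as [f | i | t IH | t1 IH1 t2 IH2]; simpl; intros Ha Hb; f_equal; auto.
  - unfold swap_var.
    destruct (Nat.eqb_spec f a); [tauto |]; destruct (Nat.eqb_spec f b); tauto.
  - apply IH1; rewrite in_app_iff in *; tauto.
  - apply IH2; rewrite in_app_iff in *; tauto.
Qed.

Lemma swap_open_rec (a b : nat) (t : term) :
  forall k u, swap a b (open_rec k u t) = open_rec k (swap a b u) (swap a b t).
Proof. induction t; simpl; intros k u; f_equal; auto; now destruct (Nat.eqb n k). Qed.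

Lemma swap_open (a b : nat) (t u : term) :
  swap a b (open t u) = open (swap a b t) (swap a b u).
Proof. apply swap_open_rec. Qed.

Lemma kam_star_swap (a b : nat) (c c' : term * stack) :
  kam_star c c' ->
  kam_star (swap a b (fst c), map (swap a b) (snd c)) (swap a b (fst c'), map (swap a b) (snd c')).
Proof.
  induction 1 as [| c1 c2 c3 Hstep _ IH]; [apply kam_refl |].
  eapply kam_trans; [| exact IH].
  destruct Hstep; simpl; [| rewrite swap_open]; constructor.
Qed.

Lemma stack_rel_mono (R R' : term -> term -> Prop) (pi pi' : stack) :
  (forall x y, R x y -> R' x y) -> stack_rel R pi pi' -> stack_rel R' pi pi'.
Proof. intros HR H; induction H; constructor; auto. Qed.

Lemma stack_rel_sym (R : term -> term -> Prop) (pi pi' : stack) :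
  symmetric_rel R -> stack_rel R pi pi' -> stack_rel R pi' pi.
Proof. intros HR H; induction H; constructor; auto. Qed.

Lemma stack_rel_map_swap (R : term -> term -> Prop) (a b : nat) (pi : stack) :
  forall pi', stack_rel R (map (swap a b) pi) pi' ->
  stack_rel (fun x y => R (swap a b x) (swap a b y)) pi (map (swap a b) pi').
Proof.
  induction pi as [| u pi IH]; intros pi' H; inversion H; subst; simpl; constructor.
  - now rewrite swap_involutive.
  - auto.
Qed.

Lemma nf_bisimilar_is_bisimulation : nf_bisimulation nf_bisimilar.
Proof.
  split.
  - intros x y [R [[Rsym Rsim] Hxy]]; exists R; split; [split |]; auto.
  - intros t s [R [[Rsym Rsim] Hts]]; destruct (Rsim _ _ Hts) as [Hlam Hvar]; split.
    + intros t' K; destruct (Hlam _ K) as (s' & K' & f & Hft & Hfs & H).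
      exists s'; split; [exact K' |].
      exists f; repeat split; auto; exists R; split; [split |]; auto.
    + intros f pi K; destruct (Hvar _ _ K) as (pi' & K' & H).
      exists pi'; split; [exact K' |].
      apply (stack_rel_mono R); [intros x y Hxy; exists R; split; [split |] |]; auto.
Qed.

Lemma nf_bisimilar_swap (a b : nat) (t s : term) :
  nf_bisimilar t s -> nf_bisimilar (swap a b t) (swap a b s).
Proof.
  intros [R [[Rsym Rsim] Hts]].
  exists (fun x y => R (swap a b x) (swap a b y)).
  split; [split | now rewrite !swap_involutive].
  - intros x y Hxy; exact (Rsym _ _ Hxy).
  - intros x y Hxy; destruct (Rsim _ _ Hxy) as [Hlam Hvar]; split.
    + intros x' K.
      pose proof (kam_star_swap a b _ _ K) as Kx; cbn [fst snd map swap] in Kx.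
      destruct (Hlam _ Kx) as (y' & Ky & f & Hfx & Hfy & H).
      pose proof (kam_star_swap a b _ _ Ky) as Ky'; cbn [fst snd map swap] in Ky'.
      rewrite swap_involutive in Ky'.
      exists (swap a b y'); split; [exact Ky' |].
      exists (swap_var a b f); split; [| split].
      * exact (notin_fv_swap _ _ _ _ Hfx).
      * apply notin_fv_swap; now rewrite swap_involutive.
      * rewrite !swap_open; simpl; now rewrite swap_var_involutive, swap_involutive.
    + intros g pi K.
      pose proof (kam_star_swap a b _ _ K) as Kx; cbn [fst snd map swap] in Kx.
      destruct (Hvar _ _ Kx) as (pi' & Ky & H).
      pose proof (kam_star_swap a b _ _ Ky) as Ky'; cbn [fst snd map swap] in Ky'.
      rewrite swap_involutive, swap_var_involutive in Ky'.
      exists (map (swap a b) pi'); split; [exact Ky' | exact (stack_rel_map_swap _ _ _ _ _ H)].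
Qed.

Lemma nf_bisimilar_open_rename (t s : term) (f g : nat) :
  ~ In f (fv t) -> ~ In f (fv s) -> ~ In g (fv t) -> ~ In g (fv s) ->
  nf_bisimilar (open t (Fvar f)) (open s (Fvar f)) ->
  nf_bisimilar (open t (Fvar g)) (open s (Fvar g)).
Proof.
  intros Hft Hfs Hgt Hgs H.
  apply (nf_bisimilar_swap f g) in H; rewrite !swap_open in H; simpl in H.
  now rewrite swap_var_l, !swap_fresh in H.
Qed.

Lemma nf_bisimilar_lam (t s t' : term) (n : nat) :
  nf_bisimilar t s -> fv_below n t -> fv_below n s ->
  kam_star (t, []) (Lam t', []) ->
  exists s', kam_star (s, []) (Lam s', []) /\
    nf_bisimilar (open t' (Fvar n)) (open s' (Fvar n)) /\
    fv_below n t' /\ fv_below n s'.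
Proof.
  intros Hts Ht Hs K.
  destruct nf_bisimilar_is_bisimulation as [_ Hsim].
  destruct (proj1 (Hsim _ _ Hts) _ K) as (s' & K' & f & Hft & Hfs & H).
  destruct (kam_run_fv_below n _ _ _ K Ht) as [Ht' _].
  destruct (kam_run_fv_below n _ _ _ K' Hs) as [Hs' _].
  exists s'; repeat split; auto.
  apply (nf_bisimilar_open_rename _ _ f); auto using fv_below_notin.
Qed.

Inductive nf_config_rel : config -> config -> Prop :=
| nf_config_ev (t s : term) (n : nat) :
    nf_bisimilar t s -> fv_below n t -> fv_below n s ->
    nf_config_rel (Ev t [] n) (Ev s [] n)
| nf_config_cont (pi pi' : stack) (n : nat) :
    stack_rel nf_bisimilar pi pi' -> stack_fv_below n pi -> stack_fv_below n pi' ->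
    nf_config_rel (Cont pi n) (Cont pi' n).

Lemma nf_config_rel_sym : symmetric_rel nf_config_rel.
Proof.
  destruct nf_bisimilar_is_bisimulation as [Hsym _].
  intros C1 C2 [t s n Hts Ht Hs | pi pi' n Hpi Bpi Bpi']; constructor; auto.
  exact (stack_rel_sym _ _ _ Hsym Hpi).
Qed.

Lemma nf_config_rel_flag_step (C1 C2 C1' C1'' : config) (F : flag) :
  nf_config_rel C1 C2 -> tau_star C1 C1' -> flag_step C1' F C1'' ->
  exists C2' C2'', tau_star C2 C2' /\ flag_step C2' F C2'' /\ nf_config_rel C1'' C2''.
Proof.
  intros [t s n Hts Ht Hs | pi pi' n Hpi Bpi Bpi'] T FS.
  - destruct (tau_star_Ev_inv _ _ _ _ T) as (t1 & pi1 & -> & K).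
    inversion FS as [t' m | f pi m | |]; subst.
    + destruct (nf_bisimilar_lam _ _ _ _ Hts Ht Hs K) as (s' & K' & H & Ht' & Hs').
      exists (Ev (Lam s') [] n), (Ev (open s' (Fvar n)) [] (S n)).
      split; [exact (kam_star_tau_star n _ _ K') | split; [constructor |]].
      constructor; auto using fv_below_open_fresh.
    + destruct nf_bisimilar_is_bisimulation as [_ Hsim].
      destruct (proj2 (Hsim _ _ Hts) _ _ K) as (pi' & K' & Hpi).
      destruct (kam_run_fv_below n _ _ _ K Ht) as [_ Bpi].
      destruct (kam_run_fv_below n _ _ _ K' Hs) as [_ Bpi'].
      exists (Ev (Fvar f) pi' n), (Cont pi' n).
      split; [exact (kam_star_tau_star n _ _ K') | split; constructor; auto].
  - rewrite (tau_star_Cont_inv _ _ _ T) in FS.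
    inversion FS as [| | u rest m | u rest m]; subst;
      inversion Hpi as [| ? u' ? rest' Hu Hrest]; subst.
    + exists (Cont (u' :: rest') n), (Ev u' [] n).
      split; [apply tau_refl | split; constructor]; auto; [apply Bpi | apply Bpi']; simpl; auto.
    + exists (Cont (u' :: rest') n), (Cont rest' n).
      split; [apply tau_refl | split; constructor]; auto;
        intros v Hv; [apply Bpi | apply Bpi']; simpl; auto.
Qed.

Lemma nf_config_rel_flag_term (C1 C2 C1' : config) (F : flag) :
  nf_config_rel C1 C2 -> tau_star C1 C1' -> flag_term C1' F ->
  exists C2', tau_star C2 C2' /\ flag_term C2' F.
Proof.
  intros HR T FT; inversion FT as [m]; subst.
  destruct HR as [t s n _ _ _ | pi pi' n Hpi _ _].
  - destruct (tau_star_Ev_inv _ _ _ _ T) as (? & ? & E & _); discriminate.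
  - apply tau_star_Cont_inv in T; injection T as <- <-.
    inversion Hpi; exists (Cont [] m); split; constructor.
Qed.

Lemma machine_bisimulation_nf_config_rel : machine_bisimulation nf_config_rel.
Proof.
  split; [exact nf_config_rel_sym |].
  intros C1 C2 HR F; split.
  - intros C1' C1'' T FS; exact (nf_config_rel_flag_step _ _ _ _ _ HR T FS).
  - intros (C1' & T & FT); exact (nf_config_rel_flag_term _ _ _ _ HR T FT).
Qed.

Lemma machine_bisimilar_sym (C1 C2 : config) :
  machine_bisimilar C1 C2 -> machine_bisimilar C2 C1.
Proof. intros [R [[Rsym Rsim] H]]; exists R; split; [split |]; auto. Qed.

Lemma machine_bisimilar_flag_step (C1 C2 C1' C1'' : config) (F : flag) :
  machine_bisimilar C1 C2 -> tau_star C1 C1' -> flag_step C1' F C1'' ->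
  exists C2' C2'', tau_star C2 C2' /\ flag_step C2' F C2'' /\ machine_bisimilar C1'' C2''.
Proof.
  intros [R [[Rsym Rsim] H]] T FS.
  destruct (proj1 (Rsim _ _ H F) _ _ T FS) as (C2' & C2'' & T' & FS' & H').
  exists C2', C2''; repeat split; auto; exists R; split; [split |]; auto.
Qed.

Lemma machine_bisimilar_flag_term (C1 C2 C1' : config) (F : flag) :
  machine_bisimilar C1 C2 -> tau_star C1 C1' -> flag_term C1' F ->
  exists C2', tau_star C2 C2' /\ flag_term C2' F.
Proof. intros [R [[Rsym Rsim] H]] T FT; apply (proj2 (Rsim _ _ H F)); eauto. Qed.

Definition machine_equiv (t s : term) : Prop :=
  exists n, fv_below n t /\ fv_below n s /\ machine_bisimilar (Ev t [] n) (Ev s [] n).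

Lemma machine_bisimilar_Cont_stack_rel (n : nat) (pi : stack) :
  forall pi', machine_bisimilar (Cont pi n) (Cont pi' n) ->
  stack_fv_below n pi -> stack_fv_below n pi' -> stack_rel machine_equiv pi pi'.
Proof.
  induction pi as [| u pi IH]; intros pi' Hmb Bpi Bpi'.
  - destruct (machine_bisimilar_flag_term _ _ _ _ Hmb (tau_refl _) (ft_done n))
      as (C & T & FT).
    rewrite (tau_star_Cont_inv _ _ _ T) in FT; inversion FT; constructor.
  - destruct (machine_bisimilar_flag_step _ _ _ _ _ Hmb (tau_refl _) (fs_enter u pi n))
      as (C & C' & T & FS & Hu).
    rewrite (tau_star_Cont_inv _ _ _ T) in FS; inversion FS as [| | u' rest m | ]; subst.
    destruct (machine_bisimilar_flag_step _ _ _ _ _ Hmb (tau_refl _) (fs_skip u pi n))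
      as (D & D' & T' & FS' & Hrest).
    rewrite (tau_star_Cont_inv _ _ _ T') in FS'; inversion FS'; subst.
    constructor.
    + exists n; repeat split; auto; [apply Bpi | apply Bpi']; simpl; auto.
    + apply (IH _ Hrest); intros v Hv; [apply Bpi | apply Bpi']; simpl; auto.
Qed.

Lemma nf_bisimulation_machine_equiv : nf_bisimulation machine_equiv.
Proof.
  split.
  - intros t s (n & Ht & Hs & Hmb); exists n; auto using machine_bisimilar_sym.
  - intros t s (n & Ht & Hs & Hmb); split.
    + intros t' K.
      destruct (machine_bisimilar_flag_step _ _ _ _ _ Hmb (kam_star_tau_star n _ _ K) (fs_lam t' n))
        as (C & C' & T & FS & Hmb').
      destruct (tau_star_Ev_inv _ _ _ _ T) as (s1 & pi1 & -> & K').
      inversion FS as [s' m | | |]; subst.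
      destruct (kam_run_fv_below n _ _ _ K Ht) as [Ht' _].
      destruct (kam_run_fv_below n _ _ _ K' Hs) as [Hs' _].
      exists s'; split; [exact K' |].
      exists n; repeat split; auto using fv_below_notin.
      exists (S n); auto using fv_below_open_fresh.
    + intros f pi K.
      destruct (machine_bisimilar_flag_step _ _ _ _ _ Hmb (kam_star_tau_star n _ _ K) (fs_var f pi n))
        as (C & C' & T & FS & Hmb').
      destruct (tau_star_Ev_inv _ _ _ _ T) as (s1 & pi1 & -> & K').
      inversion FS; subst.
      destruct (kam_run_fv_below n _ _ _ K Ht) as [_ Bpi].
      destruct (kam_run_fv_below n _ _ _ K' Hs) as [_ Bpi'].
      exists pi1; split; [exact K' |].
      exact (machine_bisimilar_Cont_stack_rel n _ _ Hmb' Bpi Bpi').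
Qed.

Theorem theorem4p5 :
  forall t s : term, wf t -> wf s ->
    (nf_bisimilar t s <->
     exists n : nat,
       (forall f, In f (fv t ++ fv s) -> f < n) /\
       machine_bisimilar (Ev t nil n) (Ev s nil n)).
Proof.
  intros t s _ _; split.
  - intros Hts.
    set (n := S (list_max (fv t ++ fv s))).
    assert (Hn : forall f, In f (fv t ++ fv s) -> f < n)
      by (intros f Hf; apply le_n_S, in_le_list_max, Hf).
    destruct (fv_below_app n t s Hn) as [Ht Hs].
    exists n; split; [exact Hn |].
    exists nf_config_rel; split; [exact machine_bisimulation_nf_config_rel |].
    constructor; assumption.
  - intros (n & Hn & Hmb).
    destruct (fv_below_app n t s Hn) as [Ht Hs].
    exists machine_equiv; split; [exact nf_bisimulation_machine_equiv |].
    exists n; auto.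
Qed.
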